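(* If $a$ is an integral algebraic element of a ring $K$, then the monogenic ring $\mathbb{Z}\langle a\rangle$ is finitely separable.
   Context: Rings are associative and not necessarily unital. $a\in K$ is integral algebraic if $f(a)=0$ for some monic $f\in\mathbb{Z}[x]$ with $f(0)=0$. $\mathbb{Z}\langle a\rangle=\{g(a): g\in\mathbb{Z}[x],\ g(0)=0\}$ is the subring generated by $a$. A ring $R$ is finitely separable if for every $r\in R$ and every subring $A\subseteq R$ with $r\notin A$ there exist a finite ring $F$ and a homomorphism $\varphi:R\to F$ with $\varphi(r)\notin\varphi(A)$. *)

From HB Require Import structures.
From mathcomp Require Import all_boot all_order all_algebra.
Set Implicit Arguments. Unset Strict Implicit. Unset Printing Implicit Defensive.
Import GRing.Theory.
Local Open Scope ring_scope.

Definition is_rng (V : zmodType) (mul : V -> V -> V) : Prop :=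
  associative mul /\ left_distributive mul +%R /\ right_distributive mul +%R.

(* rpow mul a n = a^(n+1) (positive powers only, no unit needed) *)
Definition rpow (V : zmodType) (mul : V -> V -> V) (a : V) (n : nat) : V :=
  iter n (mul a) a.

(* g(a) for g in Z[x] with g(0) = 0: sum_{i >= 1} g_i a^i (constant term ignored) *)
Definition peval (V : zmodType) (mul : V -> V -> V) (g : {poly int}) (a : V) : V :=
  \sum_(1 <= i < size g) (rpow mul a i.-1) *~ g`_i.

Definition int_algebraic (V : zmodType) (mul : V -> V -> V) (a : V) : Prop :=
  exists f : {poly int}, f \is monic /\ f`_0 = 0 /\ peval mul f a = 0.

Definition Zmono (V : zmodType) (mul : V -> V -> V) (a : V) : V -> Prop :=
  fun x => exists g : {poly int}, g`_0 = 0 /\ x = peval mul g a.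

Definition is_subring (V : zmodType) (mul : V -> V -> V) (R A : V -> Prop) : Prop :=
  (forall x, A x -> R x) /\ A 0 /\
  (forall x y, A x -> A y -> A (x - y)) /\
  (forall x y, A x -> A y -> A (mul x y)).

Definition is_hom_on (V : zmodType) (mul : V -> V -> V)
    (W : zmodType) (mulW : W -> W -> W) (R : V -> Prop) (phi : V -> W) : Prop :=
  forall x y, R x -> R y ->
    phi (x + y) = phi x + phi y /\ phi (mul x y) = mulW (phi x) (phi y).

Definition fin_separable (V : zmodType) (mul : V -> V -> V) (R : V -> Prop) : Prop :=
  forall (r : V) (A : V -> Prop), R r -> is_subring mul R A -> ~ A r ->
    exists (F : finZmodType) (mulF : F -> F -> F) (phi : V -> F),
      is_rng mulF /\ is_hom_on mul mulF R phi /\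
      ~ (exists x, A x /\ phi x = phi r).

(* Let f be a monic relation of a with f(0) = 0 and n = deg f - 1.  Then a^(n+1)
   is a Z-combination of a, ..., a^n, so Z<a> is the finitely generated abelian
   group spanned by these powers, and it is closed under multiplication.

   In a finitely generated abelian group G, a point x outside a subgroup H stays
   outside H + mG for some m > 0.  This goes by induction on the generators,
   G = Ze + G': either a positive multiple d e lies in H + G', and then
   H + (md)G is contained in H + mG'; or e is free modulo H + G', and x is
   separated either by working modulo H + Ze or, when x = h + c e, by taking
   m > |c|.

   Given a subring A of Z<a> and r outside A, pick m with r outside A + mZ<a>.
   Since mZ<a> is an ideal of Z<a> of finite index, the quotient Z<a>/mZ<a> is a
   finite ring in which the image of r avoids the image of A. *)

From HB Require Import structures.
From mathcomp Require Import all_boot all_order all_algebra.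
From Stdlib Require Import Classical ClassicalEpsilon.
From Stdlib Require Import FunctionalExtensionality PropExtensionality.
Set Implicit Arguments. Unset Strict Implicit. Unset Printing Implicit Defensive.
Import GRing.Theory.
Local Open Scope ring_scope.

Section Subgroups.
Variable V : zmodType.
Implicit Types (H G : V -> Prop) (x y : V).

Definition subgroup H := H 0 /\ forall x y, H x -> H y -> H (x - y).

Section SubgroupClosure.
Variables (H : V -> Prop) (sH : subgroup H).

Lemma subgroup0 : H 0. Proof. by case: sH. Qed.

Lemma subgroupB x y : H x -> H y -> H (x - y). Proof. by case: sH => _; apply. Qed.

Lemma subgroupN x : H x -> H (- x).
Proof. by move=> Hx; rewrite -sub0r; apply: subgroupB => //; apply: subgroup0. Qed.

Lemma subgroupD x y : H x -> H y -> H (x + y).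
Proof. by move=> Hx Hy; rewrite -[y]opprK; apply/subgroupB/subgroupN. Qed.

Lemma subgroup_sum (I : Type) (r : seq I) (P : pred I) (F : I -> V) :
  (forall i, P i -> H (F i)) -> H (\sum_(i <- r | P i) F i).
Proof.
by move=> HF; elim/big_rec: _ => [|i y /HF]; [apply: subgroup0 | apply: subgroupD].
Qed.

Lemma subgroupMn x n : H x -> H (x *+ n).
Proof.
move=> Hx; elim: n => [|n IH]; rewrite ?mulr0n ?mulrS; first exact: subgroup0.
exact: subgroupD.
Qed.

Lemma subgroupMz x k : H x -> H (x *~ k).
Proof.
by case: k => n Hx; rewrite ?NegzE ?mulrNz; [|apply: subgroupN]; apply: subgroupMn.
Qed.

End SubgroupClosure.

Definition scaled G m x := exists2 g, G g & x = g *+ m.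

Definition addm H G m x := exists h g, [/\ H h, G g & x = h + g *+ m].

Definition zmultiples (e x : V) := exists c, x = e *~ c.

Lemma subgroup_scaled G m : subgroup G -> subgroup (scaled G m).
Proof.
move=> sG; split; first by exists 0; [apply: subgroup0 | rewrite mul0rn].
move=> _ _ [g Gg ->] [g' Gg' ->].
by exists (g - g'); [apply: subgroupB | rewrite mulrnBl].
Qed.

Lemma subgroup_addm H G m : subgroup H -> subgroup G -> subgroup (addm H G m).
Proof.
move=> sH sG; split.
  by exists 0, 0; rewrite mul0rn addr0; split=> //; apply: subgroup0.
move=> _ _ [h [g [Hh Gg ->]]] [h' [g' [Hh' Gg' ->]]].
exists (h - h'), (g - g'); split; try exact: subgroupB.
by rewrite mulrnBl opprD addrACA.
Qed.

Lemma subgroup_zmultiples e : subgroup (zmultiples e).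
Proof.
split; first by exists 0; rewrite mulr0z.
by move=> _ _ [c ->] [d ->]; exists (c - d); rewrite mulrzBr.
Qed.

Definition zspan (es : seq V) x :=
  exists k : nat -> int, x = \sum_(i < size es) es`_i *~ k i.

Lemma subgroup_zspan es : subgroup (zspan es).
Proof.
split; first by exists (fun=> 0); rewrite big1 // => i _; rewrite mulr0z.
move=> _ _ [k ->] [l ->]; exists (fun i => k i - l i).
by rewrite -sumrB; apply: eq_bigr => i _; rewrite mulrzBr.
Qed.

Lemma zspan_nth es i : (i < size es)%N -> zspan es es`_i.
Proof.
move=> lt_i; exists (fun j => (j == i)%:Z).
rewrite (bigD1 (Ordinal lt_i)) //= eqxx mulr1z big1 ?addr0 // => j.
by rewrite -val_eqE /= => /negbTE ->; rewrite mulr0z.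
Qed.

Lemma zspan_nil x : zspan [::] x -> x = 0.
Proof. by case=> k ->; rewrite big_ord0. Qed.

Lemma zspan_cons e es x :
  zspan (e :: es) x -> exists c y, zspan es y /\ x = e *~ c + y.
Proof.
case=> k ->; exists (k 0%N), (\sum_(i < size es) es`_i *~ k i.+1).
by split; [exists (fun i => k i.+1) | rewrite big_ord_recl].
Qed.

End Subgroups.

Section Separation.
Variable V : zmodType.
Implicit Types (H G : V -> Prop) (x y e : V).

Definition mult_separable H G :=
  forall x, ~ H x -> exists2 m, (0 < m)%N & ~ addm H G m x.

Lemma torsion_or_free H e : subgroup H ->
  (exists2 d, (0 < d)%N & H (e *+ d)) \/ (forall c, H (e *~ c) -> c = 0).
Proof.
move=> sH; case: (classic (exists2 d, (0 < d)%N & H (e *+ d))) => [|no_torsion];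
  [by left | right].
case=> [[|n]|n] // He; exfalso; apply: no_torsion; exists n.+1 => //.
by move: He; rewrite NegzE mulrNz => /(subgroupN sH); rewrite opprK.
Qed.

Section SpanCons.
Variables (H : V -> Prop) (e : V) (es : seq V).
Hypothesis sH : subgroup H.

Lemma addm_cons_zmultiples m x :
  addm H (zspan (e :: es)) m x -> addm (addm H (zmultiples e) 1) (zspan es) m x.
Proof.
case=> h [_ [Hh /zspan_cons [c [y [y_span ->]]] ->]].
exists (h + e *~ (c * m%:Z) *+ 1), y; split=> //.
  by exists h, (e *~ (c * m%:Z)); split=> //; exists (c * m%:Z).
by rewrite mulr1n mulrnDl addrA mulrzA -pmulrn.
Qed.

Lemma addm_cons_torsion d m x : addm H (zspan es) 1 (e *+ d) ->
  addm H (zspan (e :: es)) (m * d) x -> addm H (zspan es) m x.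
Proof.
have sG := subgroup_zspan es.
case=> h1 [g1 [Hh1 Gg1 ed]] [h [_ [Hh /zspan_cons [c [y [Gy ->]]] ->]]].
exists (h + h1 *~ c *+ m), (g1 *~ c + y *+ d); split.
- by apply: subgroupD => //; apply: (subgroupMn sH); apply: (subgroupMz sH).
- by apply: (subgroupD sG); [apply: (subgroupMz sG) | apply: (subgroupMn sG)].
have edc : e *~ c *+ d = h1 *~ c + g1 *~ c.
  by rewrite pmulrn mulrzA_C mulrzA -pmulrn ed mulr1n mulrzDl.
by rewrite mulnC mulrnA mulrnDl edc !mulrnDl !addrA.
Qed.

Lemma addm_cons_free h0 c0 : (forall c, addm H (zspan es) 1 (e *~ c) -> c = 0) ->
  H h0 -> c0 != 0 -> ~ addm H (zspan (e :: es)) `|c0|.+1 (h0 + e *~ c0).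
Proof.
move=> free Hh0 c0_neq0 [h [_ [Hh /zspan_cons [w [y [Gy ->]]] E]]].
suff /eqP : c0 - w * `|c0|.+1%:Z = 0.
  rewrite subr_eq0 => /eqP c0E.
  have /dvdzP : exists q, c0 = q * `|c0|.+1%:Z by exists w.
  by move/dvdn_leq; rewrite absz_gt0 ltnn => /(_ c0_neq0).
apply: free; exists (h - h0), (y *+ `|c0|.+1); split.
- exact: subgroupB.
- exact: (subgroupMn (subgroup_zspan es)).
rewrite mulr1n mulrzBr mulrzA -pmulrn.
have -> : e *~ c0 = h + (e *~ w + y) *+ `|c0|.+1 - h0 by rewrite -E (addrC h0) addrK.
rewrite mulrnDl (addrC (_ *+ _)) addrA.
by rewrite [_ - h0 - _]addrAC addrK addrAC.
Qed.

End SpanCons.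

Lemma mult_separable_cons e es :
  (forall H, subgroup H -> mult_separable H (zspan es)) ->
  forall H, subgroup H -> mult_separable H (zspan (e :: es)).
Proof.
move=> IH H sH x xNH.
have sG := subgroup_zspan es.
have [[d d_gt0 torsion] | free] := torsion_or_free e (subgroup_addm 1 sH sG).
  have [m m_gt0 xNm] := IH H sH x xNH.
  by exists (m * d)%N; [rewrite muln_gt0 m_gt0 | move/(addm_cons_torsion sH torsion)].
case: (classic (addm H (zmultiples e) 1 x)) => [[h0 [_ [Hh0 [c0 ->] xE]]] | xNHe].
  rewrite {}xE mulr1n in xNH *.
  have c0_neq0 : c0 != 0.
    by apply/eqP => c0_0; apply: xNH; rewrite c0_0 mulr0z addr0.
  by exists `|c0|.+1 => //; apply: addm_cons_free.
have [m m_gt0 xNm] := IH _ (subgroup_addm 1 sH (subgroup_zmultiples e)) x xNHe.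
by exists m => // /addm_cons_zmultiples.
Qed.

Lemma mult_separable_zspan es H : subgroup H -> mult_separable H (zspan es).
Proof.
elim: es H => [|e es IH] H sH; last exact: mult_separable_cons.
move=> x xNH; exists 1%N => // [[h [_ [Hh /zspan_nil -> xE]]]].
by apply: xNH; rewrite xE mul0rn addr0.
Qed.

End Separation.

Section Residues.
Variable V : zmodType.

Definition zcomb (es : seq V) m (c : {ffun 'I_(size es) -> 'I_m}) :=
  \sum_(i < size es) es`_i *+ c i.

Lemma zspan_zcomb es m (c : {ffun 'I_(size es) -> 'I_m}) : zspan es (zcomb c).
Proof.
apply: (subgroup_sum (subgroup_zspan es)) => i _.
exact/(subgroupMn (subgroup_zspan es))/zspan_nth.
Qed.

Lemma zcomb_cover es m y : (0 < m)%N -> zspan es y ->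
  exists c : {ffun 'I_(size es) -> 'I_m}, scaled (zspan es) m (zcomb c - y).
Proof.
move=> m_gt0 [k ->].
have mod_ge0 i : 0 <= (k i %% m)%Z by apply: modz_ge0; rewrite eqz_nat -lt0n.
have lt_mod i : (`|(k i %% m)%Z| < m)%N.
  by rewrite -ltz_nat gez0_abs // ltz_pmod // ltz_nat.
exists [ffun i : 'I_(size es) => Ordinal (lt_mod i)].
exists (\sum_(i < size es) es`_i *~ - (k i %/ m)%Z).
  by exists (fun i => - (k i %/ m)%Z).
rewrite /zcomb -sumrB -sumrMnl; apply: eq_bigr => i _; rewrite ffunE /=.
rewrite pmulrn -mulrzBr pmulrn -mulrzA gez0_abs //; congr (_ *~ _).
by rewrite {2}(divz_eq (k i) m) opprD addrC subrK mulNr.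
Qed.

End Residues.

Section Rng.
Variables (V : zmodType) (mul : V -> V -> V).
Hypotheses (mulA : associative mul) (mulDl : left_distributive mul +%R)
  (mulDr : right_distributive mul +%R).

Definition lmul x : V -> V := mul x.
Definition rmul y : V -> V := mul^~ y.

Lemma lmul_is_nmod_morphism x : nmod_morphism (lmul x).
Proof.
split=> [|y z]; last exact: mulDr.
by apply: (addrI (mul x 0)); rewrite /lmul -mulDr !addr0.
Qed.
HB.instance Definition _ x :=
  GRing.isNmodMorphism.Build V V (lmul x) (lmul_is_nmod_morphism x).

Lemma rmul_is_nmod_morphism y : nmod_morphism (rmul y).
Proof.
split=> [|x z]; last exact: mulDl.
by apply: (addrI (mul 0 y)); rewrite /rmul -mulDl !addr0.
Qed.
HB.instance Definition _ y :=
  GRing.isNmodMorphism.Build V V (rmul y) (rmul_is_nmod_morphism y).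

Lemma mul_subr x x' z z' : mul x' z' - mul x z = mul (x' - x) z' + mul x (z' - z).
Proof.
have -> : mul (x' - x) z' = mul x' z' - mul x z' by exact: (raddfB (rmul z')).
have -> : mul x (z' - z) = mul x z' - mul x z by exact: (raddfB (lmul x)).
by rewrite addrA subrK.
Qed.

Lemma scaled_mull (S : V -> Prop) m : (forall x y, S x -> S y -> S (mul x y)) ->
  forall x y, S x -> scaled S m y -> scaled S m (mul x y).
Proof.
move=> S_mul x y Sx [g Sg ->].
by exists (mul x g); [exact: S_mul | exact: (raddfMn (lmul x))].
Qed.

Lemma scaled_mulr (S : V -> Prop) m : (forall x y, S x -> S y -> S (mul x y)) ->
  forall x y, scaled S m x -> S y -> scaled S m (mul x y).
Proof.
move=> S_mul x y [g Sg ->] Sy.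
by exists (mul g y); [exact: S_mul | exact: (raddfMn (rmul y))].
Qed.

Section FiniteQuotient.
Variables (S N : V -> Prop) (X : finType) (enc : X -> V).
Hypotheses (sS : subgroup S) (sN : subgroup N).
Hypothesis S_mul : forall x y, S x -> S y -> S (mul x y).
Hypothesis N_mull : forall x y, S x -> N y -> N (mul x y).
Hypothesis N_mulr : forall x y, N x -> S y -> N (mul x y).
Hypothesis S_enc : forall c, S (enc c).
Hypothesis enc_cover : forall y, S y -> exists c, N (enc c - y).

Let inhX : inhabited X.
Proof. by have [c _] := enc_cover (subgroup0 sS); exists. Qed.

Definition code y : X := epsilon inhX (fun c => N (enc c - y)).

Lemma code_spec y : S y -> N (enc (code y) - y).
Proof.
by move=> Sy; apply: (epsilon_spec inhX (fun c => N (enc c - y))); apply: enc_cover.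
Qed.

Lemma code_eq y z : N (y - z) -> code y = code z.
Proof.
move=> Nyz; congr epsilon; apply: functional_extensionality => c.
apply: propositional_extensionality; split=> [Ny | Nz].
  by rewrite -(subrK y (enc c)) -addrA; apply: subgroupD.
by rewrite -(subrK z (enc c)) -[_ + z - y]addrA -(opprB y z); apply: subgroupB.
Qed.

Definition canon c := code (enc c).

Lemma canon_id c : canon (canon c) = canon c.
Proof. exact/code_eq/code_spec. Qed.

(* The quotient S/N, realized as the codes fixed by [canon]: one per class. *)
Definition F := {c : X | canon c == c}.
HB.instance Definition _ := Finite.copy F {c : X | canon c == c}.

Definition inF y : F := exist _ (canon (code y)) (introT eqP (canon_id _)).
Definition vF (u : F) : V := enc (val u).

Lemma inF_vF u : inF (vF u) = u.
Proof. by apply: val_inj; rewrite /= -/(canon (val u)) !(eqP (valP u)). Qed.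

Lemma inF_ind (P : F -> Prop) : (forall y, S y -> P (inF y)) -> forall u, P u.
Proof. by move=> PS u; rewrite -(inF_vF u); apply/PS/S_enc. Qed.

Lemma vF_inF y : S y -> N (vF (inF y) - y).
Proof.
by move=> Sy; rewrite /vF /= [canon _](code_eq (code_spec Sy)); apply: code_spec.
Qed.

Lemma inF_eq y z : S y -> S z -> N (y - z) -> inF y = inF z.
Proof. by move=> Sy Sz /code_eq yz; apply: val_inj; rewrite /= yz. Qed.

Lemma eq_inF y z : S y -> S z -> inF y = inF z -> N (y - z).
Proof.
move=> Sy Sz yz; have := subgroupB sN (vF_inF Sz) (vF_inF Sy).
by rewrite yz opprB [_ + (y - _)]addrC addrA subrK.
Qed.

Definition zeroF : F := inF 0.
Definition oppF (u : F) : F := inF (- vF u).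
Definition addF (u v : F) : F := inF (vF u + vF v).
Definition mulF (u v : F) : F := inF (mul (vF u) (vF v)).

Lemma oppF_inF y : S y -> oppF (inF y) = inF (- y).
Proof.
move=> Sy; apply: inF_eq; [exact: (subgroupN sS (S_enc _)) | exact: subgroupN |].
by rewrite -opprD; apply: (subgroupN sN); apply: vF_inF.
Qed.

Lemma addF_inF y z : S y -> S z -> addF (inF y) (inF z) = inF (y + z).
Proof.
move=> Sy Sz; apply: inF_eq.
- exact: (subgroupD sS (S_enc _) (S_enc _)).
- exact: subgroupD.
by rewrite opprD addrACA; apply: (subgroupD sN); apply: vF_inF.
Qed.

Lemma mulF_inF y z : S y -> S z -> mulF (inF y) (inF z) = inF (mul y z).
Proof.
move=> Sy Sz; apply: inF_eq; [exact: (S_mul (S_enc _) (S_enc _)) | exact: S_mul |].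
rewrite mul_subr; apply: (subgroupD sN).
  by apply: N_mulr; [exact: vF_inF | exact: S_enc].
by apply: N_mull; [| exact: vF_inF].
Qed.

Lemma addFA : associative addF.
Proof.
elim/inF_ind=> x Sx; elim/inF_ind=> y Sy; elim/inF_ind=> z Sz.
by rewrite !addF_inF ?addrA //; apply: (subgroupD sS).
Qed.

Lemma addFC : commutative addF.
Proof. by move=> u v; rewrite /addF addrC. Qed.

Lemma add0F : left_id zeroF addF.
Proof.
by elim/inF_ind=> x Sx; rewrite addF_inF ?add0r //; apply: (subgroup0 sS).
Qed.

Lemma addNF : left_inverse zeroF oppF addF.
Proof.
by elim/inF_ind=> x Sx; rewrite oppF_inF // addF_inF ?addNr //; apply: (subgroupN sS).
Qed.

HB.instance Definition _ := GRing.isZmodule.Build F addFA addFC add0F addNF.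

Lemma mulFA : associative mulF.
Proof.
elim/inF_ind=> x Sx; elim/inF_ind=> y Sy; elim/inF_ind=> z Sz.
by rewrite !mulF_inF ?mulA //; apply: S_mul.
Qed.

Lemma mulFDl : left_distributive mulF addF.
Proof.
elim/inF_ind=> x Sx; elim/inF_ind=> y Sy; elim/inF_ind=> z Sz.
by rewrite !(addF_inF, mulF_inF) ?mulDl //; (apply: (subgroupD sS) || apply: S_mul).
Qed.

Lemma mulFDr : right_distributive mulF addF.
Proof.
elim/inF_ind=> x Sx; elim/inF_ind=> y Sy; elim/inF_ind=> z Sz.
by rewrite !(addF_inF, mulF_inF) ?mulDr //; (apply: (subgroupD sS) || apply: S_mul).
Qed.

Lemma finite_quotient : exists (F : finZmodType) (mulF : F -> F -> F) (phi : V -> F),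
  [/\ is_rng mulF, is_hom_on mul mulF S phi &
      forall x y, S x -> S y -> phi x = phi y -> N (x - y)].
Proof.
exists F, mulF, inF; split.
- by split; [exact: mulFA | split; [exact: mulFDl | exact: mulFDr]].
- by move=> x y Sx Sy; split; [exact/esym/addF_inF | exact/esym/mulF_inF].
- exact: eq_inF.
Qed.

End FiniteQuotient.

Section Powers.
Variables (a : V) (n : nat).

(* The powers a^1, ..., a^n. *)
Definition pows := [seq rpow mul a i | i <- iota 0 n].

Lemma pows_nth i : (i < n)%N -> pows`_i = rpow mul a i.
Proof. by move=> lt_i; rewrite (nth_map 0%N) ?size_iota // nth_iota. Qed.

Lemma zspan_pows_rpow_lt i : (i < n)%N -> zspan pows (rpow mul a i).
Proof.
by move=> lt_i; rewrite -pows_nth //; apply: zspan_nth; rewrite size_map size_iota.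
Qed.

Hypothesis pow_n : zspan pows (rpow mul a n).

Lemma zspan_pows_mull y : zspan pows y -> zspan pows (mul a y).
Proof.
have sG := subgroup_zspan pows.
case=> k ->; rewrite -/(lmul a _) raddf_sum; apply: (subgroup_sum sG) => i _.
rewrite raddfMz; apply: (subgroupMz sG).
have lt_i : (i < n)%N by rewrite -(size_iota 0 n) -(size_map (rpow mul a)) ltn_ord.
rewrite /lmul pows_nth //.
case: (ltnP i.+1 n) => [|le_n]; first exact: zspan_pows_rpow_lt.
have n_eq : n = i.+1 by apply/eqP; rewrite eqn_leq le_n lt_i.
by move: pow_n; rewrite n_eq.
Qed.

Lemma zspan_pows_rpow j : zspan pows (rpow mul a j).
Proof.
elim: j => [|j IH]; last exact: zspan_pows_mull.
have [n0|n_gt0] := posnP n; last exact: zspan_pows_rpow_lt.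
by move: pow_n; rewrite n0.
Qed.

Lemma zspan_pows_mul x y : zspan pows x -> zspan pows y -> zspan pows (mul x y).
Proof.
have sG := subgroup_zspan pows.
move=> [k ->] Gy.
have rpow_mul j : zspan pows (mul (rpow mul a j) y).
  elim: j => [|j IH]; first exact: zspan_pows_mull.
  by rewrite /= -mulA; apply: zspan_pows_mull.
rewrite -/(rmul y _) raddf_sum; apply: (subgroup_sum sG) => i _.
rewrite raddfMz; apply: (subgroupMz sG).
have lt_i : (i < n)%N by rewrite -(size_iota 0 n) -(size_map (rpow mul a)) ltn_ord.
by rewrite pows_nth //; apply: rpow_mul.
Qed.

Lemma Zmono_zspan x : Zmono mul a x -> zspan pows x.
Proof.
have sG := subgroup_zspan pows.
case=> g [_ ->]; apply: (subgroup_sum sG) => i _.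
exact/(subgroupMz sG)/zspan_pows_rpow.
Qed.

End Powers.

Lemma int_algebraic_pows a : int_algebraic mul a ->
  exists n, zspan (pows a n) (rpow mul a n).
Proof.
case=> f [f_monic [f0 fa]].
have size_f : size f = (size f).-2.+2.
  have : (size f).-1 <> 0%N.
    move=> f_deg0; move: f_monic.
    by rewrite monicE lead_coefE f_deg0 f0 eq_sym oner_eq0.
  by case: (size f) => [|[]].
set n := (size f).-2; exists n.
have lead_f : f`_n.+1 = 1 by move: f_monic; rewrite monicE lead_coefE size_f => /eqP.
have sG := subgroup_zspan (pows a n).
move: fa; rewrite /peval size_f big_nat_recr //= lead_f mulr1z addrC => /eqP.
rewrite addr_eq0 => /eqP ->; apply: (subgroupN sG).
rewrite big_seq; apply: (subgroup_sum sG) => i.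
rewrite mem_index_iota => /andP[i_ge1 i_lt].
by apply/(subgroupMz sG)/zspan_pows_rpow_lt; rewrite prednK.
Qed.

End Rng.

Theorem lemma6 (K : zmodType) (mulK : K -> K -> K) (HK : is_rng mulK)
    (a : K) (Ha : int_algebraic mulK a) :
  fin_separable mulK (Zmono mulK a).
Proof.
case: HK => mulA [mulDl mulDr].
have [n pow_n] := int_algebraic_pows Ha.
pose S := zspan (pows mulK a n).
have sS : subgroup S := subgroup_zspan _.
have S_mul := zspan_pows_mul mulA mulDl mulDr pow_n.
have Zmono_S := Zmono_zspan mulDr pow_n.
move=> r A Zr [A_Z [A0 [AB _]]] rNA.
have [m m_gt0 rNm] := mult_separable_zspan (pows mulK a n) (conj A0 AB) rNA.
have [F [mulF [phi [F_rng phi_hom phi_ker]]]] := finite_quotient mulA mulDl mulDr sS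
  (subgroup_scaled m sS) S_mul (scaled_mull (m := m) mulDr S_mul)
  (scaled_mulr (m := m) mulDl S_mul) (zspan_zcomb (m := m)) (fun y => zcomb_cover m_gt0).
exists F, mulF, phi; split=> //; split=> [x y Zx Zy | [x [Ax phi_xr]]].
  by apply: phi_hom; apply: Zmono_S.
have [w Sw xr] := phi_ker _ _ (Zmono_S _ (A_Z _ Ax)) (Zmono_S _ Zr) phi_xr.
apply: rNm; exists x, (- w); split=> //; first exact: (subgroupN sS).
by rewrite mulNrn -xr opprB addrC subrK.
Qed.
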